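(* Let $q\in\mathbb{C}$ with $0<|q|<1$ and $n\in\mathbb{N}$. Then \[ \frac{1}{(q)_\infty}\sum_{k=0}^\infty\frac{q^{k^2}}{(q)_k (q)_{n-k}} =\frac{1}{(q)_n} \sum_{k=0}^{\infty}\frac{q^{k^2}}{(q)_k (q)_{n+k}}, \qquad \frac{1}{(q)_\infty}\sum_{k=0}^\infty\frac{q^{k^2+k}}{(q)_k (q)_{n-k}} =\frac{1}{(q)_n}\sum_{k=0}^{\infty}\frac{q^{k^2+k}}{(q)_k (q)_{n+k+1}}. \]
   Context: $(q)_n=(1-q)(1-q^2)\cdots(1-q^n)$ for $n\ge0$ (with $(q)_0=1$), $1/(q)_n=0$ for $n<0$, and $(q)_\infty=\prod_{i\ge1}(1-q^i)$. *)

From Stdlib Require Import Reals.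
From Coquelicot Require Import Coquelicot.
Open Scope C_scope.

Fixpoint qpoch (q : C) (n : nat) : C :=
  match n with
  | O => 1
  | S m => qpoch q m * (1 - q ^ (S m))
  end.

(* 1/(q)_m for an integer index m, with the convention 1/(q)_m = 0 for m < 0. *)
Definition qpoch_inv (q : C) (m : Z) : C :=
  if (m <? 0)%Z then 0 else / qpoch q (Z.to_nat m).

Definition qpoch_inf_is (q : C) (P : C) : Prop :=
  filterlim (fun N => qpoch q N) eventually (locally P).

From Stdlib Require Import Reals ZArith Lia Lra.
From Coquelicot Require Import Coquelicot.

(* Write B_a(n) and A_a(n), a = 0, 1, for the left- and right-hand sums of the two identities
   without their prefactors.  Termwise manipulations with (q)_(m+1) = (q)_m (1 - q^(m+1)) give
     A_0(n+1) = A_0(n) + q^(n+1) A_1(n),   A_1(n+1) = A_1(n) + q^(n+1) (A_0(n+1) - A_1(n)),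
     (1 - q^(n+1)) B_0(n+1) = B_0(n) + q^(n+1) B_1(n),   B_1(n+1) = B_1(n) + q^(n+1) B_0(n+1),
   so (P A_0, P A_1) with P = (q)_oo and ((q)_n B_0, (q)_n B_1) solve the same linear recurrence
   U' = U + t V, V' = (1 - t) V + t U' with t = q^(n+1).  Their difference tends to 0 by
   Tannery's theorem, since (q)_N / (q)_(N-k) and P / (q)_(N+k+a) both tend to 1.  Running the
   recurrence backwards multiplies |U| + |V| by at most (1 + |t|) / (1 - |t|), and these factors
   have a convergent product, so a solution tending to 0 vanishes identically. *)

Open Scope R_scope.

Lemma exp_le_exp (x y : R) : x <= y -> exp x <= exp y.
Proof.
  intros [Hlt|Heq]; [left; now apply exp_increasing | rewrite Heq; apply Rle_refl].
Qed.

Lemma pow_le_1 (r : R) (n : nat) : 0 <= r <= 1 -> r ^ n <= 1.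
Proof. intros Hr. rewrite <- (pow1 n). now apply pow_incr. Qed.

Lemma le_exp_mul_of_le (M M' s r : R) :
  0 <= s <= r -> r < 1 -> 0 <= M' -> (1 - s) * M <= (1 + s) * M' ->
  M <= exp (2 / (1 - r) * s) * M'.
Proof.
  intros Hs Hr HM' H.
  set (u := / (1 - r)). assert (Hu : 0 < u) by (apply Rinv_0_lt_compat; lra).
  assert (Hu1 : s * (u * (1 - r)) = s) by (unfold u; field; lra).
  replace (2 / (1 - r) * s) with (2 * u * s) by (unfold u; field; lra).
  eapply Rle_trans; [|apply Rmult_le_compat_r; [exact HM' | apply exp_ineq1_le]].
  apply (Rmult_le_reg_r (1 - s)); [lra|].
  assert (Hgap : 0 <= s * u * (r - s)) by (apply Rmult_le_pos; [apply Rmult_le_pos|]; lra).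
  assert (Hf : 1 + s <= (1 + 2 * u * s) * (1 - s)) by lra.
  assert (Hf' := Rmult_le_compat_r M' _ _ HM' Hf). lra.
Qed.

Lemma exp_geom_forward (p : nat -> R) (c r : R) :
  0 <= r < 1 -> 0 <= c -> p 0%nat <= 1 ->
  (forall n, p (S n) <= p n * exp (c * r ^ S n)) ->
  forall n, p n <= exp (c / (1 - r)).
Proof.
  intros Hr Hc H0 Hstep.
  assert (Hgen : forall n, p n <= exp (c * (1 - r ^ S n) / (1 - r))).
  { induction n as [|n IH].
    - replace (c * (1 - r ^ 1) / (1 - r)) with c by (simpl; field; lra).
      eapply Rle_trans; [exact H0|]. eapply Rle_trans; [|apply exp_ineq1_le]. lra.
    - eapply Rle_trans; [apply Hstep|].
      eapply Rle_trans; [apply Rmult_le_compat_r; [left; apply exp_pos | exact IH]|].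
      rewrite <- exp_plus. right. f_equal. simpl. field. lra. }
  intros n. eapply Rle_trans; [apply Hgen|]. apply exp_le_exp.
  unfold Rdiv. apply Rmult_le_compat_r; [left; apply Rinv_0_lt_compat; lra|].
  assert (H := pow_le r (S n) ltac:(lra)). nra.
Qed.

Lemma exp_geom_backward (m : nat -> R) (c r : R) :
  0 <= r < 1 -> 0 <= c -> (forall n, 0 <= m n) ->
  (forall n, m n <= exp (c * r ^ S n) * m (S n)) ->
  forall d n, m n <= exp (c / (1 - r)) * m (n + d)%nat.
Proof.
  intros Hr Hc Hm Hstep d n.
  assert (Hgen : forall d n,
    m n <= exp (c * (r ^ S n - r ^ S (n + d)) / (1 - r)) * m (n + d)%nat).
  { clear d n. induction d as [|d IH]; intros n.
    - rewrite Nat.add_0_r, Rminus_diag, Rmult_0_r. unfold Rdiv.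
      rewrite Rmult_0_l, exp_0. lra.
    - eapply Rle_trans; [apply Hstep|].
      eapply Rle_trans; [apply Rmult_le_compat_l; [left; apply exp_pos | apply (IH (S n))]|].
      rewrite <- Rmult_assoc, <- exp_plus, Nat.add_succ_r. apply Rmult_le_compat_r; [apply Hm|].
      right. f_equal. simpl. field. lra. }
  eapply Rle_trans; [apply Hgen|]. apply Rmult_le_compat_r; [apply Hm|].
  apply exp_le_exp. unfold Rdiv. apply Rmult_le_compat_r; [left; apply Rinv_0_lt_compat; lra|].
  assert (H1 : r ^ S n <= 1) by (apply pow_le_1; lra).
  assert (H2 : 0 <= r ^ S (n + d)) by (apply pow_le; lra). nra.
Qed.

Open Scope C_scope.

Lemma filterlim_C_Cmod (u : nat -> C) (l : C) :
  filterlim u eventually (locally l) <-> is_lim_seq (fun N => Cmod (u N - l)) 0%R.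
Proof.
  rewrite (filterlim_locally_ball_norm (K := C_AbsRing)), <- is_lim_seq_spec.
  split; intros H eps; eapply filter_imp; try exact (H eps); intros N HN; cbv beta in HN |- *.
  - rewrite Rminus_0_r, Rabs_pos_eq by apply Cmod_ge_0. exact HN.
  - rewrite Rminus_0_r, Rabs_pos_eq in HN by apply Cmod_ge_0. exact HN.
Qed.

Lemma is_series_C_unique (a : nat -> C) (l l' : C) :
  is_series a l -> is_series a l' -> l = l'.
Proof. apply filterlim_locally_unique. Qed.

(* A junk value when [a] is not summable. *)
Definition Csum (a : nat -> C) : C := @iota C_CompleteNormedModule (is_series a).

Lemma is_series_Csum (a : nat -> C) : ex_series a -> is_series a (Csum a).
Proof. intros [l Hl]. unfold Csum, is_series. now rewrite (iota_filterlim_locally _ l). Qed.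

Lemma is_series_C_ext (a b : nat -> C) (l : C) :
  (forall k, a k = b k) -> is_series a l -> is_series b l.
Proof. apply is_series_ext. Qed.

Lemma is_series_C_of_succ (a : nat -> C) (l : C) :
  a 0%nat = 0 -> is_series (fun k => a (S k)) l -> is_series a l.
Proof.
  intros H0 H. apply is_series_decr_1. rewrite H0.
  match goal with |- is_series _ ?x => replace x with l by (change (l = l + - 0); ring) end.
  exact H.
Qed.

Lemma ex_series_C_geom (a : nat -> C) (M r : R) :
  (0 <= r < 1)%R -> (forall k, Cmod (a k) <= M * r ^ k)%R -> ex_series a.
Proof.
  intros Hr H. apply (ex_series_le a (fun k => r ^ k * M)%R).
  - intros k. rewrite Rmult_comm. apply H.
  - apply ex_series_scal_r, ex_series_geom. rewrite Rabs_right; lra.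
Qed.

Lemma Cmod_le_of_is_series (a : nat -> C) (l : C) (c : R) (M0 : nat) :
  is_series a l -> (forall M, (M0 <= M)%nat -> Cmod (sum_n a M) <= c)%R -> (Cmod l <= c)%R.
Proof.
  intros Hl Hc.
  assert (Hlim : is_lim_seq (fun M => Cmod (sum_n a M)) (Cmod l)).
  { eapply filterlim_comp; [exact Hl|].
    exact (filterlim_norm (K := C_AbsRing) (V := C_NormedModule) l). }
  apply (is_lim_seq_le_loc _ _ _ _ (ex_intro _ M0 Hc : eventually _) Hlim (is_lim_seq_const c)).
Qed.

Lemma is_lim_seq_sum_n_0 (u : nat -> nat -> R) (K : nat) :
  (forall k, is_lim_seq (fun N => u N k) 0%R) -> is_lim_seq (fun N => sum_n (u N) K) 0%R.
Proof.
  intros Hu. induction K as [|K IH].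
  - apply (is_lim_seq_ext (fun N => u N 0%nat)); [intros N; now rewrite sum_O | apply Hu].
  - apply (is_lim_seq_ext (fun N => sum_n (u N) K + u N (S K))%R).
    + intros N. now rewrite sum_Sn.
    + rewrite <- (Rplus_0_l 0). now apply is_lim_seq_plus'.
Qed.

Lemma tannery (a : nat -> nat -> C) (l : nat -> C) (b : nat -> R) :
  (forall N, is_series (a N) (l N)) -> (forall N k, Cmod (a N k) <= b k)%R -> ex_series b ->
  (forall k, is_lim_seq (fun N => Cmod (a N k)) 0%R) -> is_lim_seq (fun N => Cmod (l N)) 0%R.
Proof.
  intros Hl Hab Hb Hk. apply is_lim_seq_spec. intros eps.
  destruct (Cauchy_ex_series b Hb (pos_div_2 eps)) as [K HK].
  assert (Hhead := is_lim_seq_sum_n_0 _ K Hk). apply is_lim_seq_spec in Hhead.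
  destruct (Hhead (pos_div_2 eps)) as [N0 HN0]. exists N0. intros N HN.
  specialize (HN0 N HN). simpl in HN0 |- *.
  assert (Hl_le : (Cmod (l N) <= sum_n (fun k => Cmod (a N k)) K + eps / 2)%R).
  { apply (Cmod_le_of_is_series _ _ _ K (Hl N)). intros M HM.
    assert (Hsplit : sum_n (a N) M = sum_n (a N) K + sum_n_m (a N) (S K) M).
    { exact (sum_n_m_Chasles (a N) 0 K M ltac:(lia) HM). }
    rewrite Hsplit. eapply Rle_trans; [apply Cmod_triangle|]. apply Rplus_le_compat.
    - apply (norm_sum_n_m (K := C_AbsRing) (V := C_NormedModule) (a N) 0 K).
    - eapply Rle_trans; [apply (norm_sum_n_m (K := C_AbsRing) (V := C_NormedModule))|].
      eapply Rle_trans; [apply (sum_n_m_le _ b), Hab|].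
      specialize (HK (S K) M ltac:(lia) HM). eapply Rle_trans; [apply Rle_abs|]. left; exact HK. }
  rewrite Rminus_0_r, Rabs_pos_eq by apply Cmod_ge_0.
  rewrite Rminus_0_r in HN0. assert (H := Rle_abs (sum_n (fun k => Cmod (a N k)) K)). lra.
Qed.

Lemma Cinv_mul_eq (a b x y : C) : a <> 0 -> b <> 0 -> a * x = b * y -> / b * x = / a * y.
Proof.
  intros Ha Hb E. transitivity (/ b * / a * (a * x)); [field; now split|].
  rewrite E. field. now split.
Qed.

Lemma Cmod_one_sub_ge (x : C) : (1 - Cmod x <= Cmod (1 - x))%R.
Proof.
  assert (H := Cmod_triangle (1 - x) x). replace (1 - x + x) with (RtoC 1) in H by ring.
  rewrite Cmod_1 in H. lra.
Qed.

Lemma Cmod_one_sub_le (x : C) : (Cmod (1 - x) <= 1 + Cmod x)%R.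
Proof. rewrite <- Cmod_1 at 2. rewrite <- (Cmod_opp x). apply Cmod_triangle. Qed.

(** * Backward uniqueness for the coupled recurrence *)

Definition pair_rec (t : nat -> C) (U V : nat -> C) : Prop :=
  forall n, U (S n) = U n + t n * V n /\ V (S n) = (1 - t n) * V n + t n * U (S n).

Lemma pair_rec_sub (t U V U' V' : nat -> C) :
  pair_rec t U V -> pair_rec t U' V' ->
  pair_rec t (fun n => U n - U' n) (fun n => V n - V' n).
Proof.
  intros H H' n; cbv beta. destruct (H n) as [HU HV], (H' n) as [HU' HV'].
  rewrite HV, HV', HU, HU'. split; ring.
Qed.

Lemma pair_rec_step_le (x y x' y' t : C) (s : R) :
  (Cmod t <= s <= 1)%R -> x' = x + t * y -> y' = (1 - t) * y + t * x' ->
  ((1 - s) * (Cmod x + Cmod y) <= (1 + s) * (Cmod x' + Cmod y'))%R.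
Proof.
  intros Hs Ex' Ey'. assert (Ht := Cmod_ge_0 t).
  assert (Hx : (Cmod x <= Cmod x' + s * Cmod y)%R).
  { replace x with (x' + - (t * y)) by (rewrite Ex'; ring).
    eapply Rle_trans; [apply Cmod_triangle|]. rewrite Cmod_opp, Cmod_mult.
    assert (H := Cmod_ge_0 y). nra. }
  assert (Hy : ((1 - s) * Cmod y <= Cmod y' + s * Cmod x')%R).
  { assert (H1 := Cmod_one_sub_ge t).
    rewrite Ey'.
    assert (H2 := Cmod_triangle ((1 - t) * y + t * x') (- (t * x'))).
    replace ((1 - t) * y + t * x' + - (t * x')) with ((1 - t) * y) in H2 by ring.
    rewrite Cmod_opp, !Cmod_mult in H2.
    assert (H3 := Cmod_ge_0 y). assert (H4 := Cmod_ge_0 x'). nra. }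
  assert (Hx' : (0 <= s * (1 - s) * Cmod x')%R)
    by (apply Rmult_le_pos; [apply Rmult_le_pos|apply Cmod_ge_0]; lra).
  assert (Hy' := Rmult_le_compat_l s _ _ ltac:(lra) Hy).
  assert (Hx'' := Rmult_le_compat_l (1 - s) _ _ ltac:(lra) Hx). lra.
Qed.

Lemma pair_rec_eq0 (t : nat -> C) (r : R) (U V : nat -> C) :
  (0 <= r < 1)%R -> (forall n, Cmod (t n) <= r ^ S n)%R -> pair_rec t U V ->
  is_lim_seq (fun n => Cmod (U n)) 0%R -> is_lim_seq (fun n => Cmod (V n)) 0%R ->
  forall n, U n = 0 /\ V n = 0.
Proof.
  intros Hr Ht Hrec HU HV n.
  set (m := fun n => (Cmod (U n) + Cmod (V n))%R).
  assert (Hm : forall n, (0 <= m n)%R).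
  { intros k. unfold m. assert (H := Cmod_ge_0 (U k)). assert (H' := Cmod_ge_0 (V k)). lra. }
  assert (Hstep : forall n, (m n <= exp (2 / (1 - r) * r ^ S n) * m (S n))%R).
  { intros k. destruct (Hrec k) as [HUk HVk].
    assert (Hs : (0 <= r ^ S k <= r)%R).
    { split; [apply pow_le; lra|]. simpl. assert (H := pow_le_1 r k ltac:(lra)). nra. }
    assert (Htk := Ht k).
    apply le_exp_mul_of_le; [exact Hs | lra | apply Hm|].
    exact (pair_rec_step_le _ _ _ _ (t k) (r ^ S k) ltac:(lra) HUk HVk). }
  assert (Hback := exp_geom_backward m (2 / (1 - r)) r Hr
                     ltac:(apply Rlt_le, Rdiv_lt_0_compat; lra) Hm Hstep).
  assert (Hlim : is_lim_seq m 0%R).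
  { rewrite <- (Rplus_0_l 0). now apply is_lim_seq_plus'. }
  assert (Hmn : (m n <= 0)%R).
  { apply (is_lim_seq_le (fun _ => m n) (fun d => exp (2 / (1 - r) / (1 - r)) * m (n + d)%nat)%R
      (m n) 0%R (fun d => Hback d n) (is_lim_seq_const _)).
    replace (Finite 0) with (Rbar_mult (exp (2 / (1 - r) / (1 - r))) 0%R)
      by (simpl; now rewrite Rmult_0_r).
    apply is_lim_seq_scal_l.
    apply (is_lim_seq_incr_n m n) in Hlim.
    apply (is_lim_seq_ext _ _ _ (fun d => f_equal m (Nat.add_comm d n)) Hlim). }
  assert (HUn := Cmod_ge_0 (U n)). assert (HVn := Cmod_ge_0 (V n)).
  unfold m in Hmn. split; apply Cmod_eq_0; lra.
Qed.

(** * Estimates for the q-Pochhammer symbol *)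

Lemma qpoch_inv_of_nat (q : C) (z : Z) (m : nat) : z = Z.of_nat m -> qpoch_inv q z = / qpoch q m.
Proof.
  intros ->. unfold qpoch_inv. destruct (Z.ltb_spec (Z.of_nat m) 0); [lia|]. now rewrite Nat2Z.id.
Qed.

Lemma qpoch_inv_neg (q : C) (z : Z) : (z < 0)%Z -> qpoch_inv q z = 0.
Proof. intros Hz. unfold qpoch_inv. destruct (Z.ltb_spec z 0); [reflexivity | lia]. Qed.

Lemma qpoch_S (q : C) (m : nat) : qpoch q (S m) = qpoch q m * (1 - q ^ S m).
Proof. reflexivity. Qed.

Section QPochhammer.

Variable q : C.
Hypothesis hq : (Cmod q < 1)%R.

Let r := Cmod q.

Let hr : (0 <= r < 1)%R.
Proof. split; [apply Cmod_ge_0 | exact hq]. Qed.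

Lemma Cmod_pow_S_le (m : nat) : (Cmod (q ^ S m) <= r ^ S m <= r)%R.
Proof.
  rewrite Cmod_pow. split; [apply Rle_refl|]. simpl.
  pose proof hr as Hr. assert (H := pow_le_1 r m ltac:(lra)). nra.
Qed.

Lemma one_sub_pow_neq0 (m : nat) : 1 - q ^ S m <> 0.
Proof.
  intros H. assert (H1 := Cmod_one_sub_ge (q ^ S m)). rewrite H, Cmod_0 in H1.
  assert (H2 := Cmod_pow_S_le m). pose proof hr. lra.
Qed.

Lemma Cmod_qpoch_le (m : nat) : (Cmod (qpoch q m) <= exp (1 / (1 - r)))%R.
Proof.
  apply (exp_geom_forward (fun m => Cmod (qpoch q m)) 1 r hr ltac:(lra)).
  - simpl. rewrite Cmod_1. lra.
  - intros n. rewrite qpoch_S, Cmod_mult. apply Rmult_le_compat_l; [apply Cmod_ge_0|].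
    rewrite Rmult_1_l. eapply Rle_trans; [|apply exp_ineq1_le].
    assert (H := Cmod_one_sub_le (q ^ S n)). assert (H' := Cmod_pow_S_le n). lra.
Qed.

Lemma qpoch_neq0 (m : nat) : qpoch q m <> 0.
Proof.
  induction m as [|m IH]; simpl.
  - apply C1_nz.
  - apply Cmult_neq_0; [exact IH | apply one_sub_pow_neq0].
Qed.

Lemma Cmod_inv_qpoch_le (m : nat) : (Cmod (/ qpoch q m) <= exp (/ (1 - r) / (1 - r)))%R.
Proof.
  pose proof hr as Hr.
  apply (exp_geom_forward (fun m => Cmod (/ qpoch q m)) (/ (1 - r)) r hr
    ltac:(apply Rlt_le, Rinv_0_lt_compat; lra)).
  - simpl. replace (/ 1) with (RtoC 1) by field. rewrite Cmod_1. lra.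
  - intros n. cbv beta.
    replace (/ qpoch q (S n)) with (/ qpoch q n * / (1 - q ^ S n))
      by (rewrite qpoch_S; field; split; [apply one_sub_pow_neq0 | apply qpoch_neq0]).
    rewrite Cmod_mult. apply Rmult_le_compat_l; [apply Cmod_ge_0|].
    set (s := Cmod (q ^ S n)). assert (Hs := Cmod_pow_S_le n). fold s in Hs.
    rewrite Cmod_inv by apply one_sub_pow_neq0.
    assert (H1 := Cmod_one_sub_ge (q ^ S n)). fold s in H1.
    eapply Rle_trans; [apply (Rinv_le_contravar (1 - s)); [lra | exact H1]|].
    replace (/ (1 - s))%R with (1 + s / (1 - s))%R by (field; lra).
    eapply Rle_trans; [apply exp_ineq1_le|]. apply exp_le_exp.
    unfold Rdiv. rewrite Rmult_comm. apply Rmult_le_compat.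
    + left; apply Rinv_0_lt_compat; lra.
    + apply Cmod_ge_0.
    + apply Rinv_le_contravar; lra.
    + apply Hs.
Qed.

Lemma Cmod_qpoch_inv_le (z : Z) : (Cmod (qpoch_inv q z) <= exp (/ (1 - r) / (1 - r)))%R.
Proof.
  unfold qpoch_inv. destruct (z <? 0)%Z; [|apply Cmod_inv_qpoch_le].
  rewrite Cmod_0. left; apply exp_pos.
Qed.

Lemma inv_qpoch_S (m : nat) : / qpoch q m = (1 - q ^ S m) * / qpoch q (S m).
Proof.
  rewrite qpoch_S. field. split; [apply one_sub_pow_neq0 | apply qpoch_neq0].
Qed.

Lemma qpoch_inf_exists : exists P, qpoch_inf_is q P.
Proof.
  pose proof hr as Hr.
  set (d := fun m => qpoch q (S m) - qpoch q m).
  assert (Hd : ex_series d).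
  { apply (ex_series_C_geom d (exp (1 / (1 - r))) r hr). intros m. unfold d.
    rewrite qpoch_S. replace (qpoch q m * (1 - q ^ S m) - qpoch q m) with (- (qpoch q m * q ^ S m))
      by ring.
    rewrite Cmod_opp, Cmod_mult. apply Rmult_le_compat; try apply Cmod_ge_0.
    - apply Cmod_qpoch_le.
    - destruct (Cmod_pow_S_le m) as [H1 _]. eapply Rle_trans; [exact H1|].
      simpl. assert (H := pow_le r m ltac:(lra)). nra. }
  destruct Hd as [l Hl]. exists (l + 1).
  assert (Htele : forall N, sum_n d N = qpoch q (S N) - 1).
  { induction N as [|N IH].
    - rewrite sum_O. unfold d. simpl. ring.
    - rewrite sum_Sn, IH. unfold d.
      change (qpoch q (S N) - 1 + (qpoch q (S (S N)) - qpoch q (S N)) = qpoch q (S (S N)) - 1).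
      ring. }
  apply filterlim_C_Cmod in Hl. apply filterlim_C_Cmod. apply is_lim_seq_incr_1.
  refine (is_lim_seq_ext _ _ _ _ Hl). intros N. rewrite Htele. f_equal. ring.
Qed.

Lemma qpoch_inf_neq0 (P : C) : qpoch_inf_is q P -> P <> 0.
Proof.
  intros HP HP0. rewrite HP0 in HP. apply filterlim_C_Cmod in HP.
  set (K := exp (/ (1 - r) / (1 - r))).
  assert (Hlow : forall N, (/ K <= Cmod (qpoch q N - 0))%R).
  { intros N. replace (qpoch q N - 0) with (qpoch q N) by ring.
    assert (H := Cmod_inv_qpoch_le N). rewrite Cmod_inv in H by apply qpoch_neq0.
    assert (Hpos : (0 < Cmod (qpoch q N))%R) by (apply Cmod_gt_0, qpoch_neq0).
    rewrite <- (Rinv_inv (Cmod (qpoch q N))). apply Rinv_le_contravar; [|exact H].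
    now apply Rinv_0_lt_compat. }
  assert (H := is_lim_seq_le _ _ _ _ Hlow (is_lim_seq_const (/ K)) HP). simpl in H.
  assert (HK : (0 < / K)%R) by apply Rinv_0_lt_compat, exp_pos. lra.
Qed.

Lemma qpoch_ratio_lim (P : C) (k j : nat) : qpoch_inf_is q P ->
  is_lim_seq (fun N => Cmod (qpoch q N * qpoch_inv q (Z.of_nat N - Z.of_nat k)
                             - P * / qpoch q (N + j))) 0%R.
Proof.
  intros HP. apply filterlim_C_Cmod in HP.
  set (e := fun N => Cmod (qpoch q N - P)). set (K := exp (/ (1 - r) / (1 - r))).
  apply (is_lim_seq_le_le_loc (fun _ => 0%R) _
           (fun N => K * (e N + e (N - k)%nat + e (N + j)%nat))%R).
  - exists k. intros N HN. split; [apply Cmod_ge_0|].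
    rewrite (qpoch_inv_of_nat _ _ (N - k)) by lia.
    assert (N1 := qpoch_neq0 (N - k)). assert (N2 := qpoch_neq0 (N + j)).
    replace (qpoch q N * / qpoch q (N - k) - P * / qpoch q (N + j))
      with ((qpoch q N - P) * / qpoch q (N - k) + - ((qpoch q (N - k) - P) * / qpoch q (N - k))
            + (qpoch q (N + j) - P) * / qpoch q (N + j)) by (field; split; assumption).
    eapply Rle_trans; [apply Cmod_triangle|].
    eapply Rle_trans; [apply Rplus_le_compat_r, Cmod_triangle|].
    rewrite Cmod_opp, !Cmod_mult. fold (e N) (e (N - k)%nat) (e (N + j)%nat).
    assert (H1 := Cmod_inv_qpoch_le (N - k)). assert (H2 := Cmod_inv_qpoch_le (N + j)).
    fold K in H1, H2.
    assert (B1 := Rmult_le_compat_l (e N) _ _ (Cmod_ge_0 _) H1).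
    assert (B2 := Rmult_le_compat_l (e (N - k)%nat) _ _ (Cmod_ge_0 _) H1).
    assert (B3 := Rmult_le_compat_l (e (N + j)%nat) _ _ (Cmod_ge_0 _) H2). lra.
  - apply is_lim_seq_const.
  - replace (Finite 0) with (Rbar_mult K (0 + 0 + 0)%R) by (simpl; f_equal; ring).
    apply is_lim_seq_scal_l. apply is_lim_seq_plus'; [apply is_lim_seq_plus'|].
    + exact HP.
    + apply (is_lim_seq_incr_n _ k). refine (is_lim_seq_ext _ _ _ _ HP). intros N.
      now rewrite Nat.add_sub.
    + now apply (is_lim_seq_incr_n e j).
Qed.

Lemma Cmod_pow_mul_le (k E : nat) (x : C) (M : R) : (k <= E)%nat -> (Cmod x <= M)%R ->
  (Cmod (q ^ E * / qpoch q k * x) <= exp (/ (1 - r) / (1 - r)) * M * r ^ k)%R.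
Proof.
  intros HkE Hx. pose proof hr as Hr.
  assert (HE : (Cmod (q ^ E) <= r ^ k)%R).
  { rewrite Cmod_pow. fold r. replace E with (k + (E - k))%nat by lia. rewrite pow_add.
    assert (H1 := pow_le_1 r (E - k) ltac:(lra)). assert (H2 := pow_le r k ltac:(lra)). nra. }
  rewrite !Cmod_mult.
  assert (H1 := Cmod_inv_qpoch_le k).
  assert (H2 := Rmult_le_compat _ _ _ _ (Cmod_ge_0 _) (Cmod_ge_0 _) HE H1).
  assert (H3 := Rmult_le_compat _ _ _ _ (Rmult_le_pos _ _ (Cmod_ge_0 _) (Cmod_ge_0 _))
                  (Cmod_ge_0 _) H2 Hx).
  eapply Rle_trans; [exact H3|]. right. ring.
Qed.

End QPochhammer.

(* The index [a] is [0] for the first identity of the theorem and [1] for the second. *)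
Definition lhs_term (q : C) (a n k : nat) : C :=
  q ^ (k * k + a * k) * / qpoch q k * qpoch_inv q (Z.of_nat n - Z.of_nat k).

Definition rhs_term (q : C) (a n k : nat) : C :=
  q ^ (k * k + a * k) * / qpoch q k * / qpoch q (n + k + a).

Definition rhs_diff_term (q : C) (n k : nat) : C :=
  q ^ (S k * S k) * / qpoch q k * / qpoch q (n + k + 2).

Lemma lhs_term_of_le (q : C) (a n k j : nat) :
  n = (j + k)%nat -> lhs_term q a n k = q ^ (k * k + a * k) * / qpoch q k * / qpoch q j.
Proof. intros Hn. unfold lhs_term. now rewrite (qpoch_inv_of_nat _ _ j) by lia. Qed.

Lemma lhs_term_of_lt (q : C) (a n k : nat) : (n < k)%nat -> lhs_term q a n k = 0.
Proof. intros Hnk. unfold lhs_term. rewrite qpoch_inv_neg by lia. ring. Qed.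

Section TermRecurrences.

Variable q : C.
Hypothesis hq : (Cmod q < 1)%R.

Lemma rhs_term0_S (n k : nat) :
  rhs_term q 0 (S n) k = rhs_term q 0 n k + q ^ S n * rhs_term q 1 n k.
Proof.
  unfold rhs_term. rewrite Nat.mul_0_l, Nat.mul_1_l, !Nat.add_0_r, Nat.add_succ_l.
  replace (n + k + 1)%nat with (S (n + k)) by lia.
  rewrite (inv_qpoch_S q hq (n + k)), Cpow_add_r.
  replace (q ^ S (n + k)) with (q ^ S n * q ^ k) by (rewrite <- Cpow_add_r; f_equal; lia).
  ring.
Qed.

Lemma rhs_term1_S (n k : nat) :
  rhs_term q 1 (S n) k = rhs_term q 1 n k + q ^ S n * rhs_diff_term q n k.
Proof.
  unfold rhs_term, rhs_diff_term. rewrite Nat.mul_1_l.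
  replace (S n + k + 1)%nat with (S (n + k + 1)) by lia.
  replace (n + k + 2)%nat with (S (n + k + 1)) by lia.
  rewrite (inv_qpoch_S q hq (n + k + 1)).
  replace (q ^ S (n + k + 1)) with (q ^ S n * q ^ S k) by (rewrite <- Cpow_add_r; f_equal; lia).
  replace (S k * S k)%nat with (k * k + k + S k)%nat by lia. rewrite !Cpow_add_r. ring.
Qed.

Lemma rhs_term0_S_sub_rhs_term1 (n k : nat) :
  rhs_term q 0 (S n) (S k) - rhs_term q 1 n (S k) = rhs_diff_term q n k.
Proof.
  unfold rhs_term, rhs_diff_term. rewrite Nat.mul_0_l, Nat.mul_1_l, !Nat.add_0_r, Cpow_add_r.
  replace (S n + S k)%nat with (n + k + 2)%nat by lia.
  replace (n + S k + 1)%nat with (n + k + 2)%nat by lia.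
  rewrite (inv_qpoch_S q hq k). ring.
Qed.

Lemma rhs_term0_S_0 (n : nat) : rhs_term q 0 (S n) 0 = rhs_term q 1 n 0.
Proof. unfold rhs_term. now replace (n + 0 + 1)%nat with (S n + 0 + 0)%nat by lia. Qed.

Lemma lhs_term1_S (n k : nat) :
  lhs_term q 1 (S n) k = lhs_term q 1 n k + q ^ S n * lhs_term q 0 (S n) k.
Proof.
  destruct (le_lt_dec k n) as [Hkn|Hnk]; [|destruct (Nat.eq_dec k (S n)) as [->|Hk]].
  - rewrite (lhs_term_of_le _ 1 (S n) k (S (n - k))), (lhs_term_of_le _ 1 n k (n - k)),
      (lhs_term_of_le _ 0 (S n) k (S (n - k))) by lia.
    rewrite (inv_qpoch_S q hq (n - k)), Nat.mul_0_l, Nat.mul_1_l, Nat.add_0_r, Cpow_add_r.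
    replace (q ^ S n) with (q ^ S (n - k) * q ^ k) by (rewrite <- Cpow_add_r; f_equal; lia).
    ring.
  - rewrite (lhs_term_of_le _ 1 (S n) (S n) 0), (lhs_term_of_le _ 0 (S n) (S n) 0),
      lhs_term_of_lt by lia.
    rewrite Nat.mul_0_l, Nat.mul_1_l, Nat.add_0_r, Cpow_add_r. ring.
  - rewrite !lhs_term_of_lt by lia. ring.
Qed.

Lemma lhs_term0_S (n k : nat) :
  (1 - q ^ S n) * lhs_term q 0 (S n) (S k) - lhs_term q 0 n (S k) = q ^ S n * lhs_term q 1 n k.
Proof.
  destruct (le_lt_dec (S k) n) as [Hkn|Hnk]; [|destruct (Nat.eq_dec k n) as [<-|Hk]].
  - rewrite (lhs_term_of_le _ 0 (S n) (S k) (S (n - S k))), (lhs_term_of_le _ 0 n (S k) (n - S k)),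
      (lhs_term_of_le _ 1 n k (S (n - S k))) by lia.
    rewrite (inv_qpoch_S q hq (n - S k)), (inv_qpoch_S q hq k).
    rewrite Nat.mul_0_l, Nat.mul_1_l, Nat.add_0_r.
    replace (q ^ S n) with (q ^ S (n - S k) * q ^ S k) by (rewrite <- Cpow_add_r; f_equal; lia).
    replace (S k * S k)%nat with (k * k + k + S k)%nat by lia. rewrite !Cpow_add_r. ring.
  - rewrite (lhs_term_of_le _ 0 (S k) (S k) 0), (lhs_term_of_le _ 1 k k 0), lhs_term_of_lt by lia.
    rewrite (inv_qpoch_S q hq k), Nat.mul_0_l, Nat.mul_1_l, Nat.add_0_r.
    replace (S k * S k)%nat with (k * k + k + S k)%nat by lia. rewrite !Cpow_add_r. ring.
  - rewrite !lhs_term_of_lt by lia. ring.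
Qed.

Lemma lhs_term0_S_0 (n : nat) : (1 - q ^ S n) * lhs_term q 0 (S n) 0 - lhs_term q 0 n 0 = 0.
Proof.
  rewrite (lhs_term_of_le _ 0 (S n) 0 (S n)), (lhs_term_of_le _ 0 n 0 n) by lia.
  rewrite (inv_qpoch_S q hq n). ring.
Qed.

End TermRecurrences.

Definition lhs_sum (q : C) (a n : nat) : C := Csum (lhs_term q a n).
Definition rhs_sum (q : C) (a n : nat) : C := Csum (rhs_term q a n).

Section Sums.

Variable q : C.
Hypothesis hq : (Cmod q < 1)%R.

Let K := exp (/ (1 - Cmod q) / (1 - Cmod q)).

Lemma ex_series_pow_mul (E : nat -> nat) (x : nat -> C) :
  (forall k, k <= E k)%nat -> (forall k, Cmod (x k) <= K)%R ->
  ex_series (fun k => q ^ E k * / qpoch q k * x k).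
Proof.
  intros HE Hx. apply (ex_series_C_geom _ (K * K) (Cmod q) (conj (Cmod_ge_0 q) hq)).
  intros k. apply (Cmod_pow_mul_le q hq k (E k) (x k) K (HE k) (Hx k)).
Qed.

Lemma is_series_lhs_sum (a n : nat) : is_series (lhs_term q a n) (lhs_sum q a n).
Proof.
  apply is_series_Csum, (ex_series_pow_mul (fun k => k * k + a * k)%nat); [intros k; nia|].
  intros k. apply Cmod_qpoch_inv_le, hq.
Qed.

Lemma is_series_rhs_sum (a n : nat) : is_series (rhs_term q a n) (rhs_sum q a n).
Proof.
  apply is_series_Csum, (ex_series_pow_mul (fun k => k * k + a * k)%nat); [intros k; nia|].
  intros k. apply Cmod_inv_qpoch_le, hq.
Qed.

Lemma ex_series_rhs_diff_term (n : nat) : ex_series (rhs_diff_term q n).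
Proof.
  apply (ex_series_pow_mul (fun k => S k * S k)%nat); [intros k; nia|].
  intros k. apply Cmod_inv_qpoch_le, hq.
Qed.

Lemma rhs_sum0_S (n : nat) : rhs_sum q 0 (S n) = rhs_sum q 0 n + q ^ S n * rhs_sum q 1 n.
Proof.
  apply (is_series_C_unique (rhs_term q 0 (S n))); [apply is_series_rhs_sum|].
  refine (is_series_C_ext _ _ _ _ (is_series_plus _ _ _ _ (is_series_rhs_sum 0 n)
                                     (is_series_scal (q ^ S n) _ _ (is_series_rhs_sum 1 n)))).
  intros k. now rewrite rhs_term0_S.
Qed.

Lemma is_series_rhs_diff_term (n : nat) :
  is_series (rhs_diff_term q n) (rhs_sum q 0 (S n) - rhs_sum q 1 n).
Proof.
  destruct (ex_series_rhs_diff_term n) as [G HG].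
  replace (rhs_sum q 0 (S n) - rhs_sum q 1 n) with G; [exact HG|].
  apply (is_series_C_unique (fun k => rhs_term q 0 (S n) k - rhs_term q 1 n k)).
  - apply is_series_C_of_succ; [rewrite rhs_term0_S_0; ring|].
    refine (is_series_C_ext _ _ _ _ HG). intros k. now rewrite rhs_term0_S_sub_rhs_term1.
  - exact (is_series_minus _ _ _ _ (is_series_rhs_sum 0 (S n)) (is_series_rhs_sum 1 n)).
Qed.

Lemma rhs_sum1_S (n : nat) :
  rhs_sum q 1 (S n) = rhs_sum q 1 n + q ^ S n * (rhs_sum q 0 (S n) - rhs_sum q 1 n).
Proof.
  apply (is_series_C_unique (rhs_term q 1 (S n))); [apply is_series_rhs_sum|].
  refine (is_series_C_ext _ _ _ _ (is_series_plus _ _ _ _ (is_series_rhs_sum 1 n)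
                                     (is_series_scal (q ^ S n) _ _ (is_series_rhs_diff_term n)))).
  intros k. now rewrite rhs_term1_S.
Qed.

Lemma lhs_sum0_S (n : nat) :
  (1 - q ^ S n) * lhs_sum q 0 (S n) = lhs_sum q 0 n + q ^ S n * lhs_sum q 1 n.
Proof.
  assert (H : (1 - q ^ S n) * lhs_sum q 0 (S n) - lhs_sum q 0 n = q ^ S n * lhs_sum q 1 n).
  { apply (is_series_C_unique (fun k => (1 - q ^ S n) * lhs_term q 0 (S n) k - lhs_term q 0 n k)).
    - exact (is_series_minus _ _ _ _ (is_series_scal _ _ _ (is_series_lhs_sum 0 (S n)))
                                     (is_series_lhs_sum 0 n)).
    - apply is_series_C_of_succ; [apply lhs_term0_S_0, hq|].
      refine (is_series_C_ext _ _ _ _ (is_series_scal (q ^ S n) _ _ (is_series_lhs_sum 1 n))).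
      intros k. now rewrite lhs_term0_S. }
  rewrite <- H. ring.
Qed.

Lemma lhs_sum1_S (n : nat) : lhs_sum q 1 (S n) = lhs_sum q 1 n + q ^ S n * lhs_sum q 0 (S n).
Proof.
  apply (is_series_C_unique (lhs_term q 1 (S n))); [apply is_series_lhs_sum|].
  refine (is_series_C_ext _ _ _ _ (is_series_plus _ _ _ _ (is_series_lhs_sum 1 n)
                                     (is_series_scal (q ^ S n) _ _ (is_series_lhs_sum 0 (S n))))).
  intros k. now rewrite lhs_term1_S.
Qed.

Lemma pair_rec_rhs_sum (P : C) :
  pair_rec (fun n => q ^ S n) (fun n => P * rhs_sum q 0 n) (fun n => P * rhs_sum q 1 n).
Proof. intros n. rewrite rhs_sum1_S, rhs_sum0_S. split; ring. Qed.

Lemma pair_rec_lhs_sum :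
  pair_rec (fun n => q ^ S n)
    (fun n => qpoch q n * lhs_sum q 0 n) (fun n => qpoch q n * lhs_sum q 1 n).
Proof.
  intros n. rewrite lhs_sum1_S, !qpoch_S. split; [|ring].
  transitivity (qpoch q n * ((1 - q ^ S n) * lhs_sum q 0 (S n))); [ring|].
  rewrite lhs_sum0_S. ring.
Qed.

Lemma is_lim_seq_qpoch_lhs_sum_sub (P : C) (a : nat) : qpoch_inf_is q P ->
  is_lim_seq (fun N => Cmod (qpoch q N * lhs_sum q a N - P * rhs_sum q a N)) 0%R.
Proof.
  intros HP.
  set (c := fun k => q ^ (k * k + a * k) * / qpoch q k).
  set (X := fun N k =>
    qpoch q N * qpoch_inv q (Z.of_nat N - Z.of_nat k) - P * / qpoch q (N + (k + a))).
  assert (Hterm : forall N k, qpoch q N * lhs_term q a N k - P * rhs_term q a N k = c k * X N k).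
  { intros N k. unfold lhs_term, rhs_term, c, X. rewrite Nat.add_assoc. ring. }
  set (M := (exp (1 / (1 - Cmod q)) * K + Cmod P * K)%R).
  apply (tannery (fun N k => qpoch q N * lhs_term q a N k - P * rhs_term q a N k) _
           (fun k => K * M * Cmod q ^ k)%R).
  - intros N. exact (is_series_minus _ _ _ _ (is_series_scal _ _ _ (is_series_lhs_sum a N))
                                          (is_series_scal _ _ _ (is_series_rhs_sum a N))).
  - intros N k. rewrite Hterm. apply Cmod_pow_mul_le; [exact hq | nia|].
    unfold X. eapply Rle_trans; [apply Cmod_triangle|]. rewrite Cmod_opp, !Cmod_mult.
    apply Rplus_le_compat; apply Rmult_le_compat; try apply Cmod_ge_0; try apply Rle_refl.
    + apply Cmod_qpoch_le, hq.
    + apply Cmod_qpoch_inv_le, hq.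
    + apply Cmod_inv_qpoch_le, hq.
  - apply (ex_series_scal_l (K * M)%R (fun k => Cmod q ^ k)%R), ex_series_geom.
    rewrite Rabs_pos_eq by apply Cmod_ge_0. exact hq.
  - intros k. refine (is_lim_seq_ext (fun N => Cmod (c k) * Cmod (X N k))%R _ _ _ _).
    + intros N. now rewrite Hterm, Cmod_mult.
    + replace (Finite 0) with (Rbar_mult (Cmod (c k)) 0%R) by (simpl; now rewrite Rmult_0_r).
      apply is_lim_seq_scal_l, qpoch_ratio_lim; assumption.
Qed.

Lemma qpoch_mul_lhs_sum (P : C) (n : nat) : qpoch_inf_is q P ->
  qpoch q n * lhs_sum q 0 n = P * rhs_sum q 0 n /\ qpoch q n * lhs_sum q 1 n = P * rhs_sum q 1 n.
Proof.
  intros HP.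
  assert (Hbound : forall n, (Cmod (q ^ S n) <= Cmod q ^ S n)%R)
    by (intros m; rewrite Cmod_pow; apply Rle_refl).
  destruct (pair_rec_eq0 _ (Cmod q) _ _ (conj (Cmod_ge_0 q) hq) Hbound
              (pair_rec_sub _ _ _ _ _ pair_rec_lhs_sum (pair_rec_rhs_sum P))
              (is_lim_seq_qpoch_lhs_sum_sub P 0 HP) (is_lim_seq_qpoch_lhs_sum_sub P 1 HP) n)
    as [H0 H1].
  split; now apply Ceq_minus.
Qed.

End Sums.

Theorem mainTheorem15 (q : C) (hq0 : (0 < Cmod q)%R) (hq1 : (Cmod q < 1)%R) (n : nat) :
  exists P L1 R1 L2 R2 : C,
    qpoch_inf_is q P /\
    is_series (fun k : nat =>
      q ^ (k * k) * / qpoch q k * qpoch_inv q (Z.of_nat n - Z.of_nat k)%Z) L1 /\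
    is_series (fun k : nat =>
      q ^ (k * k) * / qpoch q k * qpoch_inv q (Z.of_nat n + Z.of_nat k)%Z) R1 /\
    is_series (fun k : nat =>
      q ^ (k * k + k) * / qpoch q k * qpoch_inv q (Z.of_nat n - Z.of_nat k)%Z) L2 /\
    is_series (fun k : nat =>
      q ^ (k * k + k) * / qpoch q k * qpoch_inv q (Z.of_nat n + Z.of_nat k + 1)%Z) R2 /\
    / P * L1 = / qpoch q n * R1 /\
    / P * L2 = / qpoch q n * R2.
Proof.
  destruct (qpoch_inf_exists q hq1) as [P HP].
  destruct (qpoch_mul_lhs_sum q hq1 P n HP) as [E0 E1].
  assert (HP0 := qpoch_inf_neq0 q hq1 P HP). assert (Hn := qpoch_neq0 q hq1 n).
  exists P, (lhs_sum q 0 n), (rhs_sum q 0 n), (lhs_sum q 1 n), (rhs_sum q 1 n).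
  repeat split.
  - exact HP.
  - refine (is_series_C_ext _ _ _ _ (is_series_lhs_sum q hq1 0 n)). intros k.
    unfold lhs_term. now rewrite Nat.mul_0_l, Nat.add_0_r.
  - refine (is_series_C_ext _ _ _ _ (is_series_rhs_sum q hq1 0 n)). intros k.
    unfold rhs_term. rewrite (qpoch_inv_of_nat _ _ (n + k)) by lia.
    now rewrite Nat.mul_0_l, !Nat.add_0_r.
  - refine (is_series_C_ext _ _ _ _ (is_series_lhs_sum q hq1 1 n)). intros k.
    unfold lhs_term. now rewrite Nat.mul_1_l.
  - refine (is_series_C_ext _ _ _ _ (is_series_rhs_sum q hq1 1 n)). intros k.
    unfold rhs_term. rewrite (qpoch_inv_of_nat _ _ (n + k + 1)) by lia. now rewrite Nat.mul_1_l.
  - now apply Cinv_mul_eq.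
  - now apply Cinv_mul_eq.
Qed.
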